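(* Let $d\ge 2$, let $B^d$ be the closed unit ball in $\mathbb{E}^d$ centred at the origin with boundary sphere $\mathbb{S}^{d-1}$, and let $K_c=\operatorname{conv}\big(\mathbb{S}^{d-1}\cup\{\boldsymbol v_i\mid i\in I\}\big)$ be a cap body, i.e. $\{\boldsymbol v_i\mid i\in I\}$ is a countable set of points of $\mathbb{E}^d\setminus B^d$ such that for any two distinct $i,j\in I$ the segment $\overline{\boldsymbol v_i\boldsymbol v_j}$ intersects $B^d$. Let $\boldsymbol u_1,\dots,\boldsymbol u_k\in\mathbb{S}^{d-1}$. Then $K_c$ is completely illuminated by the directions $\boldsymbol u_1,\dots,\boldsymbol u_k$ if and only if both of the following hold: (i) for every $i\in I$ the closed spherical cap $C_i=\{\boldsymbol x\in\mathbb{S}^{d-1}\mid \langle \boldsymbol x,\boldsymbol v_i\rangle\ge 1\}$ is contained in the open hemisphere $\operatorname{Hem}_{-\boldsymbol u_j}$ for some $j\in\{1,\dots,k\}$; and (ii) $\bigcup_{j=1}^k \operatorname{Hem}_{-\boldsymbol u_j}=\mathbb{S}^{d-1}$.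
   Context: For a unit vector $\boldsymbol u$, $\operatorname{Hem}_{\boldsymbol u}=\{\boldsymbol x\in\mathbb{S}^{d-1}\mid\langle\boldsymbol x,\boldsymbol u\rangle>0\}$ is the open hemisphere centred at $\boldsymbol u$. For a convex body $K$ (compact convex set with nonempty interior), a direction $\boldsymbol u\in\mathbb{S}^{d-1}$ illuminates a boundary point $\boldsymbol p$ of $K$ if there is $\lambda>0$ with $\boldsymbol p+\lambda\boldsymbol u$ in the interior of $K$; $K$ is completely illuminated by a set of directions if every boundary point of $K$ is illuminated by at least one of them. *)

(* E^d is modelled as row vectors 'rV[R]_d over R : realType,
   with its canonical (normed) topology, which is the Euclidean topology. *)
From HB Require Import structures.
From mathcomp Require Import all_boot all_order all_algebra.
From mathcomp Require Import all_classical all_reals all_analysis.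
Set Implicit Arguments. Unset Strict Implicit. Unset Printing Implicit Defensive.
Import Order.TTheory GRing.Theory Num.Theory.
Import numFieldNormedType.Exports.
Local Open Scope classical_set_scope.
Local Open Scope ring_scope.

Section Defs.
Variables (R : realType) (d : nat).
Notation vec := 'rV[R]_d.

Definition dotv (x y : vec) : R := \sum_(i < d) x ord0 i * y ord0 i.

Definition ball1 : set vec := [set x | dotv x x <= 1].
Definition sphere1 : set vec := [set x | dotv x x = 1].

Definition Hem (u : vec) : set vec := [set x | sphere1 x /\ 0 < dotv x u].

Definition cap (v : vec) : set vec := [set x | sphere1 x /\ 1 <= dotv x v].

Definition segment (a b : vec) : set vec :=
  [set (1 - t) *: a + t *: b | t in `[0, 1]%classic].

Definition conv (A : set vec) : set vec :=
  [set x | exists n (w : 'I_n -> R) (p : 'I_n -> vec),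
     (forall i, 0 <= w i) /\ \sum_(i < n) w i = 1 /\
     (forall i, A (p i)) /\ x = \sum_(i < n) w i *: p i].

Definition cap_body_points (V : set vec) : Prop :=
  countable V /\ V `<=` ~` ball1 /\
  (forall v w, V v -> V w -> v <> w -> segment v w `&` ball1 !=set0).

Definition cap_body (V : set vec) : set vec := conv (sphere1 `|` V).

Definition bdry (K : set vec) : set vec := closure K `\` interior K.

Definition illuminates (K : set vec) (u p : vec) : Prop :=
  exists2 lam : R, 0 < lam & interior K (p + lam *: u).

Definition completely_illuminated (K : set vec) (k : nat) (u : 'I_k -> vec) : Prop :=
  forall p, bdry K p -> exists j, illuminates K (u j) p.
End Defs.

From HB Require Import structures.
From mathcomp Require Import all_boot all_order all_algebra.
From mathcomp Require Import all_classical all_reals all_analysis.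
From mathcomp Require Import ring lra finmap.
Import Order.TTheory GRing.Theory Num.Theory.
Import numFieldNormedType.Exports.
Local Open Scope classical_set_scope.
Local Open Scope ring_scope.
Set Implicit Arguments. Unset Strict Implicit. Unset Printing Implicit Defensive.

(* The cap body K is the union of the unit ball B and the cones conv (B u {v}),
   v in V: this union contains the generators of K and, since the edge between
   any two vertices meets B, it is stable under the convex combinations that
   build the hull.  Outside any ball of radius > 1 there are only finitely many
   vertices (they are bounded and uniformly separated there), so a boundary
   point of K outside B lies on the closed cone over some vertex v.
   If the ray from v in direction u enters the open ball, u illuminates every
   point of that cone, and this ray condition is equivalent to C_v being
   contained in Hem(-u); a point x of the sphere is illuminated by every u with
   <x, u> < 0.  Conversely, if u illuminates a boundary point p at which K has
   a supporting half-space {<., z> <= <p, z>}, then <u, z> < 0: at a vertex v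
   (with z = v, and with z any point of the rim of C_v) this yields the ray
   condition, and at the point of K maximising <., x> it yields x in Hem(-u). *)

Section InnerProduct.
Variables (R : realType) (d : nat).
Notation vec := 'rV[R]_d.
Implicit Types x y z : vec.

Lemma dotvC x y : dotv x y = dotv y x.
Proof. by apply: eq_bigr => i _; rewrite mulrC. Qed.

Lemma dotvDl x y z : dotv (x + y) z = dotv x z + dotv y z.
Proof. by rewrite /dotv -big_split; apply: eq_bigr => i _; rewrite mxE mulrDl. Qed.

Lemma dotvZl (a : R) x z : dotv (a *: x) z = a * dotv x z.
Proof. by rewrite /dotv mulr_sumr; apply: eq_bigr => i _; rewrite mxE mulrA. Qed.

Lemma dotvNl x z : dotv (- x) z = - dotv x z.
Proof. by rewrite -scaleN1r dotvZl mulN1r. Qed.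

Lemma dotvBl x y z : dotv (x - y) z = dotv x z - dotv y z.
Proof. by rewrite dotvDl dotvNl. Qed.

Lemma dotv0l z : dotv 0 z = 0.
Proof. by rewrite -(scale0r 0) dotvZl mul0r. Qed.

Lemma dotvDr x y z : dotv z (x + y) = dotv z x + dotv z y.
Proof. by rewrite dotvC dotvDl !(dotvC z). Qed.

Lemma dotvZr (a : R) x z : dotv z (a *: x) = a * dotv z x.
Proof. by rewrite dotvC dotvZl dotvC. Qed.

Lemma dotvNr x z : dotv z (- x) = - dotv z x.
Proof. by rewrite dotvC dotvNl dotvC. Qed.

Lemma dotvBr x y z : dotv z (x - y) = dotv z x - dotv z y.
Proof. by rewrite dotvDr dotvNr. Qed.

Lemma dotv_suml (I : Type) (r : seq I) (P : pred I) (F : I -> vec) z :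
  dotv (\sum_(i <- r | P i) F i) z = \sum_(i <- r | P i) dotv (F i) z.
Proof. by elim/big_rec2: _ => [|i a b _ <-]; rewrite ?dotv0l ?dotvDl. Qed.

Lemma sqr_coord_le_dotv x i : x ord0 i ^+ 2 <= dotv x x.
Proof.
rewrite /dotv (bigD1 i) //= -expr2 lerDl.
by apply: sumr_ge0 => j _; rewrite -expr2 sqr_ge0.
Qed.

Lemma dotv_ge0 x : 0 <= dotv x x.
Proof. by apply: sumr_ge0 => i _; rewrite -expr2 sqr_ge0. Qed.

Lemma dotv_eq0 x : dotv x x = 0 -> x = 0.
Proof.
move=> x0; apply/rowP => i; rewrite mxE; apply/eqP.
rewrite -sqrf_eq0 eq_le sqr_ge0 andbT.
by rewrite -x0 sqr_coord_le_dotv.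
Qed.

Lemma CauchySchwarz_dotv x y : dotv x y ^+ 2 <= dotv x x * dotv y y.
Proof.
have [/dotv_eq0 ->|x0] := eqVneq (dotv x x) 0; first by rewrite !dotv0l expr0n mul0r.
have xp : 0 < dotv x x by rewrite lt_def x0 dotv_ge0.
have := dotv_ge0 (dotv x x *: y - dotv x y *: x).
by rewrite !(dotvBl, dotvBr, dotvZl, dotvZr) (dotvC y x); nra.
Qed.

End InnerProduct.

Section EuclideanNorm.
Variables (R : realType) (d : nat).
Notation vec := 'rV[R]_d.
Implicit Types x y z : vec.

(* The canonical norm of ['rV[R]_d] is the sup norm; [enorm] is the Euclidean one. *)
Definition enorm x : R := Num.sqrt (dotv x x).

Lemma enorm_ge0 x : 0 <= enorm x.
Proof. exact: sqrtr_ge0. Qed.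

Lemma sqr_enorm x : enorm x ^+ 2 = dotv x x.
Proof. by rewrite sqr_sqrtr // dotv_ge0. Qed.

Lemma enorm_le1 x : (enorm x <= 1) = (dotv x x <= 1).
Proof. by rewrite /enorm -{1}sqrtr1 ler_sqrt ?ler01. Qed.

Lemma enorm_lt1 x : (enorm x < 1) = (dotv x x < 1).
Proof. by rewrite /enorm -{1}sqrtr1 ltr_sqrt ?ltr01. Qed.

Lemma enorm_gt1 x : (1 < enorm x) = (1 < dotv x x).
Proof. by rewrite !ltNge enorm_le1. Qed.

Lemma enorm_sphere1 x : sphere1 x -> enorm x = 1.
Proof. by rewrite /sphere1 /enorm /= => ->; rewrite sqrtr1. Qed.

Lemma dotv_le_enorm x y : dotv x y <= enorm x * enorm y.
Proof.
have [/ltW|xy0] := ltrP (dotv x y) 0.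
  by move/le_trans; apply; apply: mulr_ge0; apply: enorm_ge0.
rewrite -ler_sqr ?nnegrE ?mulr_ge0 ?enorm_ge0 //.
by rewrite exprMn !sqr_enorm CauchySchwarz_dotv.
Qed.

Lemma ler_enormD x y : enorm (x + y) <= enorm x + enorm y.
Proof.
rewrite -ler_sqr ?nnegrE ?addr_ge0 ?enorm_ge0 //.
rewrite sqr_enorm !(dotvDl, dotvDr) (dotvC y x).
by have := dotv_le_enorm x y; rewrite -!sqr_enorm; nra.
Qed.

Lemma enormZ (a : R) x : enorm (a *: x) = `|a| * enorm x.
Proof.
by rewrite /enorm dotvZl dotvZr mulrA -expr2 sqrtrM ?sqr_ge0 // sqrtr_sqr.
Qed.

Lemma enorm_distC x y : enorm (x - y) = enorm (y - x).
Proof. by rewrite -opprB -scaleN1r enormZ normrN1 mul1r. Qed.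

Lemma normr_coord_le x i : `|x ord0 i| <= `|x|.
Proof.
rewrite [X in _ <= X]/Num.norm /= mx_normrE.
exact: (le_bigmax _ (fun ij : 'I_1 * 'I_d => `|x ij.1 ij.2|) (ord0, i)).
Qed.

Lemma normr_le_enorm x : `|x| <= enorm x.
Proof.
rewrite [X in X <= _]/Num.norm /= mx_normrE.
apply/bigmax_leP; split => [|[i j] _ /=]; first exact: enorm_ge0.
rewrite (ord1 i) -ler_sqr ?nnegrE ?enorm_ge0 //.
by rewrite sqr_enorm real_normK ?num_real // sqr_coord_le_dotv.
Qed.

Lemma dotv_le_normr x : dotv x x <= d%:R * `|x| ^+ 2.
Proof.
have -> : d%:R * `|x| ^+ 2 = \sum_(i < d) `|x| ^+ 2.
  by rewrite sumr_const card_ord mulr_natl.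
apply: ler_sum => i _; rewrite -expr2 -real_normK ?num_real //.
by rewrite ler_sqr ?nnegrE ?normr_coord_le.
Qed.

Lemma nbhs_enorm (p : vec) (e : R) : 0 < e -> nbhs p [set y | enorm (y - p) < e].
Proof.
move=> e0; apply/nbhs_ballP.
have d0 : 0 <= d%:R :> R by [].
have r0 : 0 < e / (d%:R + 1) by apply: divr_gt0 => //; lra.
exists (e / (d%:R + 1)) => // y; rewrite -ball_normE /ball_ /= distrC => hy.
rewrite -ltr_sqr ?nnegrE ?enorm_ge0 ?ltW // sqr_enorm.
apply: le_lt_trans (dotv_le_normr _) _.
have ry : `|y - p| ^+ 2 < (e / (d%:R + 1)) ^+ 2.
  by rewrite ltr_sqr ?nnegrE ?normr_ge0 ?ltW.
have -> : e = e / (d%:R + 1) * (d%:R + 1) by rewrite mulfVK.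
set r := e / (d%:R + 1) in ry r0 *.
have := normr_ge0 (y - p); nra.
Qed.

Lemma interior_enormP (A : set vec) (p : vec) : interior A p <->
  exists2 e, 0 < e & forall y, enorm (y - p) < e -> A y.
Proof.
split => [/nbhs_ballP [e e0 pA]|[e e0 pA]]; last first.
  by apply: filterS (nbhs_enorm p e0) => y /pA.
exists e => // y hy; apply: pA.
rewrite -ball_normE /ball_ /=.
by apply: le_lt_trans (normr_le_enorm _) _; rewrite enorm_distC.
Qed.

Lemma closure_enorm (A : set vec) (p : vec) : closure A p ->
  forall e, 0 < e -> exists2 y, A y & enorm (y - p) < e.
Proof. by move=> pA e e0; have [y []] := pA _ (nbhs_enorm p e0); exists y. Qed.

End EuclideanNorm.

Section BallCones.
Variables (R : realType) (d : nat).
Notation vec := 'rV[R]_d.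
Implicit Types b q g v w y : vec.

Definition ball_cone v : set vec :=
  [set y | exists b t, ball1 b /\ 0 <= t <= 1 /\ y = (1 - t) *: b + t *: v].

Definition cone_union (V : set vec) : set vec :=
  @ball1 R d `|` \bigcup_(v in V) ball_cone v.

Lemma sphere1_sub_ball1 : @sphere1 R d `<=` @ball1 R d.
Proof. by move=> x; rewrite /ball1 /sphere1 /= => ->. Qed.

Lemma ball1_convex b1 b2 (t : R) : ball1 b1 -> ball1 b2 -> 0 <= t <= 1 ->
  ball1 ((1 - t) *: b1 + t *: b2).
Proof.
rewrite /ball1 /= -!enorm_le1 => b1B b2B /andP[t0 t1].
apply: le_trans (ler_enormD _ _) _.
by rewrite !enormZ !ger0_norm ?subr_ge0 //; nra.
Qed.

Lemma open_ball1_comb x b (t : R) : dotv x x < 1 -> ball1 b -> 0 < t <= 1 ->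
  dotv (t *: x + (1 - t) *: b) (t *: x + (1 - t) *: b) < 1.
Proof.
rewrite /ball1 /= -!enorm_lt1 -enorm_le1 => x1 b1 /andP[t0 t1].
apply: le_lt_trans (ler_enormD _ _) _.
by rewrite !enormZ !ger0_norm ?subr_ge0 ?(ltW t0) //; nra.
Qed.

Lemma ball1_conic_comb b1 b2 (a c : R) : ball1 b1 -> ball1 b2 -> 0 <= a -> 0 <= c ->
  exists2 b, ball1 b & a *: b1 + c *: b2 = (a + c) *: b.
Proof.
move=> b1B b2B a0 c0.
have [ac0|ac0] := eqVneq (a + c) 0.
  have [-> ->] : a = 0 /\ c = 0 by split; lra.
  by exists 0; rewrite ?(scale0r, addr0) // /ball1 /= dotv0l.
have acp : 0 < a + c by rewrite lt_def ac0 addr_ge0.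
exists ((1 - c / (a + c)) *: b1 + (c / (a + c)) *: b2).
  apply: ball1_convex => //; rewrite divr_ge0 ?(ltW acp) //=.
  by rewrite ler_pdivrMr // mul1r lerDr.
by apply/rowP => i; rewrite !mxE; field.
Qed.

Lemma ball_cone_comb v b (a c : R) : ball1 b -> 0 <= a -> 0 <= c -> a + c = 1 ->
  ball_cone v (a *: b + c *: v).
Proof.
move=> bB a0 c0 ac1; exists b, c; do 2?split => //; last by rewrite -ac1 addrK.
by apply/andP; split; lra.
Qed.

Section CapBodyPoints.
Variable V : set vec.
Hypothesis hV : cap_body_points V.

Lemma vertex_gt1 v : V v -> 1 < dotv v v.
Proof. by move=> /(hV.2.1) /negP; rewrite ltNge. Qed.

Lemma segment_ball1 v w : V v -> V w -> v <> w ->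
  exists2 tau : R, 0 < tau < 1 & ball1 ((1 - tau) *: v + tau *: w).
Proof.
move=> Vv Vw vw.
have [_ [[tau /andP[] /= tau0 tau1 <-] b0B]] := hV.2.2 v w Vv Vw vw.
move: tau0 tau1; rewrite !bnd_simp => tau0 tau1.
exists tau => //; rewrite !lt_def tau0 tau1 !andbT; apply/andP; split.
  apply/eqP => tau_eq0; have /= := hV.2.1 _ Vv; apply.
  by move: b0B; rewrite tau_eq0 subr0 scale1r scale0r addr0.
apply/eqP => tau_eq1; have /= := hV.2.1 _ Vw; apply.
by move: b0B; rewrite -tau_eq1 subrr scale0r add0r scale1r.
Qed.

(* The edge [v, w] meets the ball at some b0, and the triangle conv {b, v, w}
   is the union of conv {b, b0, v} and conv {b, b0, w}. *)
Lemma triangle_sub_cone_union b v w (a c e : R) : ball1 b -> V v -> V w ->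
  0 <= a -> 0 <= c -> 0 <= e -> a + c + e = 1 ->
  cone_union V (a *: b + c *: v + e *: w).
Proof.
move=> bB Vv Vw a0 c0 e0 sum1.
have [<-|vw] := pselect (v = w).
  right; exists v => //; rewrite -addrA -scalerDl.
  by apply: ball_cone_comb => //; [exact: addr_ge0|rewrite addrA].
have [tau /andP[tau0 tau1] b0B] := segment_ball1 Vv Vw vw.
have [le_ec|lt_ce] := lerP (e * (1 - tau)) (c * tau).
  have f0 : 0 <= e / tau by rewrite divr_ge0 // ltW.
  have [b' b'B eb'] := ball1_conic_comb bB b0B a0 f0.
  right; exists v => //.
  have -> : a *: b + c *: v + e *: w =
      (a + e / tau) *: b' + (c - e * (1 - tau) / tau) *: v.
    by rewrite -eb'; apply/rowP => i; rewrite !mxE; field; lra.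
  apply: ball_cone_comb => //; first exact: addr_ge0.
    by rewrite subr_ge0 ler_pdivrMr.
  by rewrite -[RHS]sum1; field; lra.
have f0 : 0 <= c / (1 - tau) by rewrite divr_ge0 // subr_ge0 ltW.
have [b' b'B eb'] := ball1_conic_comb bB b0B a0 f0.
right; exists w => //.
have -> : a *: b + c *: v + e *: w =
    (a + c / (1 - tau)) *: b' + (e - c * tau / (1 - tau)) *: w.
  by rewrite -eb'; apply/rowP => i; rewrite !mxE; field; lra.
apply: ball_cone_comb => //; first exact: addr_ge0.
  by rewrite subr_ge0 ler_pdivrMr ?subr_gt0 // ltW.
by rewrite -[RHS]sum1; field; lra.
Qed.

Lemma cone_union_comb q g (t : R) : cone_union V q -> (@sphere1 R d `|` V) g ->
  0 <= t <= 1 -> cone_union V ((1 - t) *: q + t *: g).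
Proof.
move=> qU gG /andP[t0 t1].
case: qU => [qB|[v Vv [b [s [bB [/andP[s0 s1] ->]]]]]].
  case: gG => [/sphere1_sub_ball1 gB|Vg].
    by left; apply: ball1_convex => //; apply/andP.
  by right; exists g => //; exists q, t; do 2?split => //; apply/andP.
have a0 : 0 <= (1 - t) * (1 - s) by rewrite mulr_ge0 ?subr_ge0.
have c0 : 0 <= (1 - t) * s by rewrite mulr_ge0 ?subr_ge0.
have -> : (1 - t) *: ((1 - s) *: b + s *: v) + t *: g =
    ((1 - t) * (1 - s)) *: b + ((1 - t) * s) *: v + t *: g.
  by apply/rowP => i; rewrite !mxE; ring.
case: gG => [/sphere1_sub_ball1 gB|Vg]; last first.
  by apply: triangle_sub_cone_union => //; ring.
rewrite addrAC; have [b' b'B ->] := ball1_conic_comb bB gB a0 t0.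
right; exists v => //; apply: ball_cone_comb => //; first exact: addr_ge0.
ring.
Qed.

Lemma cone_union_conic n (w : 'I_n -> R) (p : 'I_n -> vec) :
  (forall i, 0 <= w i) -> (forall i, (@sphere1 R d `|` V) (p i)) ->
  exists2 y, cone_union V y & \sum_(i < n) w i *: p i = (\sum_(i < n) w i) *: y.
Proof.
elim: n w p => [|n IH] w p w0 pG.
  by exists 0; [left; rewrite /ball1 /= dotv0l|rewrite !big_ord0 scale0r].
have [y yU ey] := IH (fun i => w (widen_ord (leqnSn n) i))
  (fun i => p (widen_ord (leqnSn n) i)) (fun i => w0 _) (fun i => pG _).
rewrite !big_ord_recr /= ey; set s := \sum_(i < n) _.
have s0 : 0 <= s by apply: sumr_ge0.
have wn0 := w0 ord_max.
have [sw0|sw0] := eqVneq (s + w ord_max) 0.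
  have [-> ->] : s = 0 /\ w ord_max = 0 by split; lra.
  by exists y; rewrite ?(scale0r, addr0).
have swp : 0 < s + w ord_max by rewrite lt_def sw0 addr_ge0.
exists ((1 - w ord_max / (s + w ord_max)) *: y +
        (w ord_max / (s + w ord_max)) *: p ord_max).
  apply: cone_union_comb => //; rewrite divr_ge0 ?(ltW swp) //=.
  by rewrite ler_pdivrMr //; lra.
by apply/rowP => i; rewrite !mxE; field.
Qed.

Lemma cap_body_sub_cone_union : cap_body V `<=` cone_union V.
Proof.
move=> _ [n [w [p [w0 [w1 [pG ->]]]]]].
by have [y yU ->] := cone_union_conic w0 pG; rewrite w1 scale1r.
Qed.

End CapBodyPoints.
End BallCones.

Section CapBodySupport.
Variables (R : realType) (d : nat) (V : set 'rV[R]_d).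
Notation vec := 'rV[R]_d.
Implicit Types b e g p u v w x y z : vec.

Lemma generator_cap_body g : (@sphere1 R d `|` V) g -> cap_body V g.
Proof.
by move=> gG; exists 1, (fun=> 1), (fun=> g); rewrite !big_ord1 scale1r.
Qed.

Lemma ball1_polar b : (0 < d)%N -> ball1 b ->
  exists e (s : R), sphere1 e /\ 0 <= s <= 1 /\ b = s *: e.
Proof.
move=> d_gt0 bB; pose i0 := Ordinal d_gt0.
have [/dotv_eq0 ->|b0] := eqVneq (dotv b b) 0.
  exists (delta_mx 0 i0), 0; rewrite scale0r lexx ler01; split => //.
  rewrite /sphere1 /= /dotv (bigD1 i0) //= big1 ?mxE ?eqxx ?mulr1 ?addr0 // => j ji.
  by rewrite !mxE (negbTE ji) mulr0.
have bp : 0 < enorm b by rewrite sqrtr_gt0 lt_def b0 dotv_ge0.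
exists ((enorm b)^-1 *: b), (enorm b); split.
  by rewrite /sphere1 /= dotvZl dotvZr -sqr_enorm; field; lra.
split; first by rewrite ltW //= enorm_le1.
by rewrite scalerA mulfV ?gt_eqF // scale1r.
Qed.

Lemma ball1_sub_cap_body : (0 < d)%N -> @ball1 R d `<=` cap_body V.
Proof.
move=> d_gt0 b /(ball1_polar d_gt0) [e [s [e1 [/andP[s0 s1] ->]]]].
exists 2, (fun i : 'I_2 => nth 0 [:: (1 + s) / 2; (1 - s) / 2] i),
  (fun i : 'I_2 => nth 0 [:: e; - e] i).
do !split.
- by case=> [[|[|]]] //= _; apply: divr_ge0; lra.
- by rewrite !big_ord_recl big_ord0 /=; field.
- by case=> [[|[|]]] //= _; left; rewrite /sphere1 /= ?dotvNl ?dotvNr ?opprK.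
- by rewrite !big_ord_recl big_ord0 /=; apply/rowP => i; rewrite !mxE; field.
Qed.

Lemma interior_cap_body_ball x : (0 < d)%N -> dotv x x < 1 ->
  interior (cap_body V) x.
Proof.
rewrite -enorm_lt1 => d_gt0 x1; apply/interior_enormP.
exists (1 - enorm x) => [|y xy]; first by rewrite subr_gt0.
apply: ball1_sub_cap_body => //; rewrite /ball1 /= -enorm_le1.
by have := ler_enormD x (y - x); rewrite addrC subrK; lra.
Qed.

Lemma cap_body_dotv_le z (c : R) :
  (forall g, (@sphere1 R d `|` V) g -> dotv g z <= c) ->
  forall x, cap_body V x -> dotv x z <= c.
Proof.
move=> Gc _ [n [w [p [w0 [w1 [pG ->]]]]]].
rewrite dotv_suml -[c]mul1r -w1 mulr_suml.
by apply: ler_sum => i _; rewrite dotvZl ler_wpM2l ?Gc.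
Qed.

Lemma interior_dotv_lt (A : set vec) p z (c : R) : interior A p ->
  (forall y, A y -> dotv y z <= c) -> 0 < dotv z z -> dotv p z < c.
Proof.
move=> /interior_enormP [e e0 pA] Ac z0.
have ez := enorm_ge0 z.
have eps0 : 0 < e / (enorm z + 1) by rewrite divr_gt0 //; lra.
have pzA : A (p + (e / (enorm z + 1)) *: z).
  by apply: pA; rewrite addrC addKr enormZ gtr0_norm // mulrAC ltr_pdivrMr; nra.
by have := Ac _ pzA; rewrite dotvDl dotvZl; have := mulr_gt0 eps0 z0; lra.
Qed.

Lemma supp_bdry (A : set vec) p z : A p ->
  (forall y, A y -> dotv y z <= dotv p z) -> 0 < dotv z z -> bdry A p.
Proof.
move=> Ap Asupp z0; split; first exact: subset_closure.
by move=> /interior_dotv_lt /(_ Asupp z0); rewrite ltxx.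
Qed.

Lemma illuminates_dotv_lt0 (A : set vec) p u z : illuminates A u p ->
  (forall y, A y -> dotv y z <= dotv p z) -> 0 < dotv z z -> dotv u z < 0.
Proof.
move=> [lam lam0 /interior_dotv_lt pA] Ap /(pA _ _ Ap).
by rewrite dotvDl dotvZl gtrDl pmulr_rlt0.
Qed.

Hypothesis hV : cap_body_points V.

(* The point of the edge [v, w] lying in the ball has [<., z> <= |z| <= <v, z>]. *)
Lemma vertex_dotv_le v w z : V v -> V w -> enorm z <= dotv v z ->
  dotv w z <= dotv v z.
Proof.
move=> Vv Vw vz; have [<-//|vw] := pselect (v = w).
have [tau /andP[tau0 tau1]] := segment_ball1 hV Vv Vw vw.
rewrite /ball1 /= -enorm_le1 => b0B.
have := dotv_le_enorm ((1 - tau) *: v + tau *: w) z.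
have := ler_piMl (enorm_ge0 z) b0B.
rewrite dotvDl !dotvZl; nra.
Qed.

Lemma cap_body_vertex_supp v z : V v -> enorm z <= dotv v z ->
  forall y, cap_body V y -> dotv y z <= dotv v z.
Proof.
move=> Vv vz; apply: cap_body_dotv_le => g [g1|Vg]; last exact: vertex_dotv_le.
by apply: le_trans (dotv_le_enorm g z) _; rewrite enorm_sphere1 // mul1r.
Qed.

End CapBodySupport.

Section Caps.
Variables (R : realType) (d : nat).
Notation vec := 'rV[R]_d.
Implicit Types u v x : vec.

(* For a unit vector [u], the point of the line [v + R u] nearest to the origin
   is [v - <v,u> u], at squared distance [<v,v> - <v,u>^2]; so this says that
   the ray from [v] in direction [u] enters the open unit ball. *)
Definition ray_enters_ball u v : Prop :=
  dotv v u < 0 /\ dotv v v - 1 < dotv v u ^+ 2.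

Lemma ray_enters_ball_point u v : sphere1 u -> ray_enters_ball u v ->
  dotv (v - dotv v u *: u) (v - dotv v u *: u) < 1.
Proof.
rewrite /sphere1 /= => u1 [_ vu].
by rewrite !(dotvBl, dotvBr, dotvZl, dotvZr) u1 (dotvC u v); lra.
Qed.

Lemma ray_enters_ball_of_rim u v : sphere1 u -> 1 < dotv v v -> dotv v u < 0 ->
  (forall x, sphere1 x -> dotv x v = 1 -> dotv x u < 0) -> ray_enters_ball u v.
Proof.
rewrite /sphere1 /= => u1 v1 vu rim; split => //.
set n := dotv v v in v1 *; set c := dotv v u in vu *.
rewrite ltNge; apply/negP => c_small.
(* Otherwise the rim point [a v + b u] with [b >= 0] has [<x,u> >= 0]. *)
have b2_pos : 0 <= (n - 1) / (n - c ^+ 2) by rewrite divr_ge0 //; lra.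
set b := Num.sqrt ((n - 1) / (n - c ^+ 2)).
have b0 : 0 <= b := sqrtr_ge0 _.
have b2 : b ^+ 2 * (n - c ^+ 2) = n - 1.
  by rewrite sqr_sqrtr // mulfVK //; lra.
set a := (1 - b * c) / n.
set x := a *: v + b *: u.
have xv : dotv x v = 1 by rewrite dotvDl !dotvZl (dotvC u v) -/n -/c /a; field; lra.
have xu : dotv x u = a * c + b by rewrite dotvDl !dotvZl u1 -/c mulr1.
have xx : dotv x x = 1.
  rewrite {2}/x dotvDr !dotvZr xv xu.
  have -> : a * 1 + b * (a * c + b) = 1 + (b ^+ 2 * (n - c ^+ 2) - (n - 1)) / n.
    by rewrite /a; field; lra.
  by rewrite b2 subrr mul0r addr0.
have := rim x xx xv; rewrite xu.
have -> : a * c + b = (c + b * (n - c ^+ 2)) / n by rewrite /a; field; lra.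
rewrite pmulr_llt0 ?invr_gt0; last lra.
have bm0 : 0 <= b * (n - c ^+ 2) by rewrite mulr_ge0 //; lra.
have : c ^+ 2 <= (b * (n - c ^+ 2)) ^+ 2.
  by rewrite exprMn [X in _ * X]expr2 mulrA b2; nra.
nra.
Qed.

Lemma cap_sub_HemN_of_ray u v : sphere1 u -> 1 < dotv v v ->
  ray_enters_ball u v -> cap v `<=` Hem (- u).
Proof.
move=> u1 v1 [vu c_big] x [x1 xv]; split => //; rewrite dotvNr oppr_gt0.
move: u1 x1; rewrite /sphere1 /= => u1 x1.
set n := dotv v v in v1 c_big *; set c := dotv v u in vu c_big *.
set a := dotv x v in xv *; set P := dotv x u.
(* Cauchy-Schwarz for the components of [x] and [u] orthogonal to [v]. *)
have := CauchySchwarz_dotv (n *: x - a *: v) (n *: u - c *: v).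
rewrite !(dotvBl, dotvBr, dotvZl, dotvZr) x1 u1 (dotvC v x) (dotvC u v).
rewrite -/n -/c -/a -/P => cs.
have nac : n * a * c < 0 by rewrite pmulr_rlt0 // mulr_gt0 //; lra.
have cs' : (n * (n * P - a * c)) ^+ 2 <= n ^+ 2 * ((n - a ^+ 2) * (n - c ^+ 2)).
  by lra.
have key : (n * (n * P - a * c)) ^+ 2 < (n * a * c) ^+ 2.
  apply: le_lt_trans cs' _.
  rewrite [X in _ < X](_ : _ = n ^+ 2 * (a ^+ 2 * c ^+ 2)); last by ring.
  rewrite ltr_pM2l ?exprn_gt0 //; last lra.
  have a2 : 1 <= a ^+ 2 by rewrite expr_ge1 //; lra.
  have : n < a ^+ 2 + c ^+ 2 by lra.
  nra.
have lt : n * (n * P - a * c) < - (n * a * c).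
  apply: le_lt_trans (ler_norm _) _.
  rewrite -ltr_sqr ?nnegrE ?normr_ge0 ?oppr_ge0 ?(ltW nac) //.
  by rewrite real_normK ?num_real // sqrrN.
have : n * n * P < 0 by nra.
by rewrite pmulr_rlt0 // mulr_gt0 //; lra.
Qed.

Lemma cap_sub_HemNP u v : sphere1 u -> 1 < dotv v v ->
  cap v `<=` Hem (- u) <-> ray_enters_ball u v.
Proof.
move=> u1 v1; split; last exact: cap_sub_HemN_of_ray.
move=> capH; have v0 : 0 < enorm v by rewrite (lt_trans ltr01) ?enorm_gt1.
apply: ray_enters_ball_of_rim => // [|x x1 xv]; last first.
  have xcap : cap v x by split; rewrite // xv.
  by have [_] := capH x xcap; rewrite dotvNr oppr_gt0.
have vcap : cap v ((enorm v)^-1 *: v).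
  split; rewrite /sphere1 /= dotvZl ?dotvZr -sqr_enorm; first by field; lra.
  by rewrite expr2 mulKf ?gt_eqF //; apply: ltW; rewrite enorm_gt1.
have [_] := capH _ vcap.
by rewrite dotvNr oppr_gt0 dotvZl pmulr_rlt0 // invr_gt0.
Qed.

End Caps.

Lemma separated_compact_finite (R : realType) (T : pseudoMetricNormedZmodType R)
    (K A : set T) (r : R) :
  compact K -> A `<=` K -> 0 < r ->
  (forall a b, A a -> A b -> a <> b -> r <= `|a - b|) -> finite_set A.
Proof.
move=> cK AK r0 Asep.
move: cK; rewrite compact_cover => /(_ T K (fun x => ball x (r / 2))) [].
- by move=> x _; exact: ball_open.
- by move=> x Kx; exists x => //; apply: ballxx; rewrite divr_gt0.
move=> D _ Kcov.
have AD : A `<=` \bigcup_(x in [set` D]) (ball x (r / 2) `&` A).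
  by move=> a Aa; have [x Dx xa] := Kcov a (AK a Aa); exists x.
apply: sub_finite_set AD _; apply: bigcup_finite => [|x _]; first exact: finite_fset.
have [[a [xa Aa]]|/forallNP noA] := pselect (exists a, (ball x (r / 2) `&` A) a).
  apply: sub_finite_set (finite_set1 a) => b [xb Ab]; apply: contrapT => ba.
  have := Asep _ _ Aa Ab (nesym ba); rewrite leNgt => /negP; apply.
  by have := ball_triangle (ball_sym xa) xb; rewrite -splitr -ball_normE.
by apply: sub_finite_set (finite_set0 T) => b /noA.
Qed.

Section Closure.
Variables (R : realType) (d : nat).
Notation vec := 'rV[R]_d.

Lemma ball1_closed : closed (@ball1 R d).
Proof.
move=> p pB; rewrite /ball1 /= -enorm_le1 leNgt -subr_gt0; apply/negP => p1.
have [y] := closure_enorm pB p1.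
rewrite /ball1 /= -enorm_le1 => y1 yp.
by have := ler_enormD y (p - y); rewrite addrC subrK enorm_distC; lra.
Qed.

Lemma ball1_compact : compact (@ball1 R d).
Proof.
apply: bounded_closed_compact ball1_closed; exists 1; split => // M M1 x.
rewrite /ball1 /= -enorm_le1 => x1.
by apply: le_trans (normr_le_enorm _) _; lra.
Qed.

Lemma ball_cone_closed (v : vec) : closed (ball_cone v).
Proof.
pose f (z : vec * R) := (1 - z.2) *: z.1 + z.2 *: v.
have -> : ball_cone v = f @` (@ball1 R d `*` `[0, 1]%classic).
  apply/seteqP; split => y.
    by move=> [b [t [bB [t01 ->]]]]; exists (b, t).
  by move=> [[b t] [bB t01] <-]; exists b, t.
apply: compact_closed; first exact: norm_hausdorff.
apply: continuous_compact; last first.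
  by apply: compact_setX; [exact: ball1_compact|exact: segment_compact].
apply: continuous_subspaceT => z; rewrite /f.
apply: cvgD; last exact: cvgZl cvg_snd.
by apply: cvgZ cvg_fst; apply: cvgB cvg_snd; exact: cvg_cst.
Qed.

End Closure.

Section FarVertices.
Variables (R : realType) (d : nat) (V : set 'rV[R]_d).
Hypothesis hV : cap_body_points V.
Notation vec := 'rV[R]_d.
Implicit Types v w : vec.

(* Otherwise the point (1 - tau) v + tau w of the edge lying in the ball would
   have squared norm at least X^2 - XY + Y^2 >= (X + Y)^2 / 4 >= 9 / 4, where
   X = (1 - tau) |v| and Y = tau |w|. *)
Lemma far_vertices_obtuse v w : V v -> V w -> v <> w ->
  3 <= enorm v -> 3 <= enorm w -> 2 * dotv v w < - (enorm v * enorm w).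
Proof.
move=> Vv Vw vw v3 w3.
have [tau /andP[tau0 tau1]] := segment_ball1 hV Vv Vw vw.
rewrite /ball1 /= !(dotvDl, dotvDr, dotvZl, dotvZr) (dotvC w v) -!sqr_enorm => b0B.
rewrite ltNge; apply/negP => obtuse.
set A := enorm v in v3 b0B obtuse *; set C := enorm w in w3 b0B obtuse *.
have cross : 0 <= tau * (1 - tau) * (2 * dotv v w + A * C).
  by rewrite !mulr_ge0 //; lra.
set X := (1 - tau) * A; set Y := tau * C.
have XY3 : 3 <= X + Y by rewrite /X /Y; nra.
have XY : 9 <= (X + Y) ^+ 2 by nra.
have : X ^+ 2 - X * Y + Y ^+ 2 <= 1 by rewrite /X /Y; nra.
have := sqr_ge0 (X - Y); nra.
Qed.

(* Normalised, three such vertices would have pairwise inner products < -1/2,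
   so the square of the norm of their sum would be negative. *)
Lemma no_three_far_vertices v1 v2 v3 : V v1 -> V v2 -> V v3 ->
  v1 <> v2 -> v1 <> v3 -> v2 <> v3 ->
  3 <= enorm v1 -> 3 <= enorm v2 -> 3 <= enorm v3 -> False.
Proof.
have unit_dotv w1 w2 : 3 <= enorm w1 -> 3 <= enorm w2 ->
    2 * dotv w1 w2 < - (enorm w1 * enorm w2) ->
    2 * dotv ((enorm w1)^-1 *: w1) ((enorm w2)^-1 *: w2) < -1.
  move=> w13 w23 obt; rewrite dotvZl dotvZr.
  have -> : 2 * ((enorm w1)^-1 * ((enorm w2)^-1 * dotv w1 w2)) =
      2 * dotv w1 w2 / (enorm w1 * enorm w2).
    by field; apply/andP; split; apply/eqP; lra.
  by rewrite ltr_pdivrMr; [lra|nra].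
have unit_sqr w : 3 <= enorm w -> dotv ((enorm w)^-1 *: w) ((enorm w)^-1 *: w) = 1.
  by move=> w3; rewrite dotvZl dotvZr -sqr_enorm; field; lra.
move=> V1 V2 V3 n12 n13 n23 h1 h2 h3.
have := dotv_ge0 ((enorm v1)^-1 *: v1 + (enorm v2)^-1 *: v2 + (enorm v3)^-1 *: v3).
rewrite !(dotvDl, dotvDr) !unit_sqr //.
have := unit_dotv _ _ h1 h2 (far_vertices_obtuse V1 V2 n12 h1 h2).
have := unit_dotv _ _ h1 h3 (far_vertices_obtuse V1 V3 n13 h1 h3).
have := unit_dotv _ _ h2 h3 (far_vertices_obtuse V2 V3 n23 h2 h3).
rewrite !(dotvC ((enorm v2)^-1 *: v2) ((enorm v1)^-1 *: v1)).
rewrite !(dotvC ((enorm v3)^-1 *: v3)).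
lra.
Qed.

Lemma cap_body_points_bounded : exists M, forall v, V v -> enorm v <= M.
Proof.
have [[v1 [V1 v13]]|no1] := pselect (exists v, V v /\ 3 < enorm v); last first.
  by exists 3 => v Vv; rewrite leNgt; apply/negP => v3; apply: no1; exists v.
have [[v2 [V2 [v21 v23]]]|no2] :=
  pselect (exists v, V v /\ v <> v1 /\ 3 < enorm v); last first.
  exists (3 + enorm v1) => v Vv; have [->|vv1] := pselect (v = v1); first lra.
  suff : enorm v <= 3 by have := enorm_ge0 v1; lra.
  by rewrite leNgt; apply/negP => v3; apply: no2; exists v.
exists (3 + enorm v1 + enorm v2) => v Vv.
have := enorm_ge0 v1; have := enorm_ge0 v2.
have [->|vv1] := pselect (v = v1); first lra.
have [->|vv2] := pselect (v = v2); first lra.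
suff : enorm v <= 3 by lra.
rewrite leNgt; apply/negP => v3.
apply: (no_three_far_vertices V1 V2 Vv (nesym v21) (nesym vv1) (nesym vv2));
  exact: ltW.
Qed.

Lemma vertex_dist_ge v w : V v -> V w -> v <> w -> enorm v - 1 <= enorm (v - w).
Proof.
move=> Vv Vw vw; have [tau /andP[tau0 tau1]] := segment_ball1 hV Vv Vw vw.
rewrite /ball1 /= -enorm_le1 => b0B.
have := ler_enormD ((1 - tau) *: v + tau *: w) (tau *: (v - w)).
have -> : (1 - tau) *: v + tau *: w + tau *: (v - w) = v.
  by apply/rowP => i; rewrite !mxE; ring.
by rewrite enormZ gtr0_norm //; have := enorm_ge0 (v - w); nra.
Qed.

Lemma far_vertices_finite (de : R) : 0 < de ->
  finite_set [set v | V v /\ 1 + de <= enorm v].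
Proof.
move=> de0; have [M VM] := cap_body_points_bounded.
have d0 : 0 <= d%:R :> R by [].
pose r := de / (d%:R + 1).
have r0 : 0 < r by rewrite divr_gt0 //; lra.
have der : de = r * (d%:R + 1) by rewrite /r mulfVK.
pose box := [set x : vec | forall i, `[- M, M]%classic (x ord0 i)].
apply: (separated_compact_finite (K := box) _ _ r0).
- by apply: (@rV_compact _ _ (fun=> `[- M, M]%classic)) => i; exact: segment_compact.
- move=> v [Vv _] i; rewrite /= in_itv /= -ler_norml.
  exact: le_trans (normr_coord_le _ _) (le_trans (normr_le_enorm _) (VM _ Vv)).
move=> v w [Vv vde] [Vw _] vw; rewrite leNgt; apply/negP => vw_r.
have := vertex_dist_ge Vv Vw vw.
have := dotv_le_normr (v - w); rewrite -sqr_enorm.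
have : `|v - w| ^+ 2 < r ^+ 2 by rewrite ltr_sqr ?nnegrE ?normr_ge0 ?(ltW r0).
have := enorm_ge0 (v - w); rewrite der in vde; nra.
Qed.

(* Points of K close to p lie in cones over vertices of norm >= 1 + de, and
   these finitely many closed cones form a closed set. *)
Lemma closure_cap_body_out p : closure (cap_body V) p -> 1 < dotv p p ->
  exists2 v, V v & ball_cone v p.
Proof.
rewrite -enorm_gt1 => pK p1.
pose de := (enorm p - 1) / 2.
have de0 : 0 < de by rewrite divr_gt0 // subr_gt0.
have pde : enorm p = 1 + 2 * de by rewrite /de; field.
pose U := \bigcup_(v in [set v | V v /\ 1 + de <= enorm v]) ball_cone v.
have cU : closed U.
  by apply: closed_bigcup (far_vertices_finite de0) _ => v _; exact: ball_cone_closed.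
suff /cU [v [Vv _] vp] : closure U p by exists v.
move=> B pB; have [y [Ky [yp yB]]] := pK _ (filterI (nbhs_enorm p de0) pB).
have y1 : 1 + de < enorm y.
  have := ler_enormD y (p - y); rewrite addrC subrK enorm_distC.
  by move: yp => /=; lra.
exists y; split => //.
case: (cap_body_sub_cone_union hV Ky) => [|[v Vv [b [t [bB [/andP[t0 t1] ey]]]]]].
  by rewrite /ball1 /= -enorm_le1; lra.
exists v; last by exists b, t; do 2?split => //; apply/andP.
split => //; rewrite leNgt; apply/negP => vde.
have : enorm y <= 1 + de.
  rewrite ey; apply: le_trans (ler_enormD _ _) _.
  rewrite !enormZ !ger0_norm ?subr_ge0 //.
  by move: bB; rewrite /ball1 /= -enorm_le1 => bB; nra.
lra.
Qed.

End FarVertices.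

Section Illumination.
Variables (R : realType) (d : nat) (V : set 'rV[R]_d).
Hypothesis hV : cap_body_points V.
Variables (k : nat) (u : 'I_k -> 'rV[R]_d).
Hypothesis hu : forall j, sphere1 (u j).

Lemma cap_body_supp_point x : sphere1 x ->
  exists2 p, cap_body V p & forall y, cap_body V y -> dotv y x <= dotv p x.
Proof.
move=> x1; have [[v [Vv vx]]|noV] := pselect (exists v, V v /\ 1 < dotv v x).
  exists v; first exact/generator_cap_body/or_intror.
  by apply: cap_body_vertex_supp => //; rewrite enorm_sphere1 // ltW.
exists x; first exact/generator_cap_body/or_introl.
have -> : dotv x x = 1 := x1.
apply: cap_body_dotv_le => g [g1|Vg].
  by apply: le_trans (dotv_le_enorm g x) _; rewrite !enorm_sphere1 // mulr1.
by rewrite leNgt; apply/negP => gx; apply: noV; exists g.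
Qed.

Lemma illuminated_cap_sub_HemN v : completely_illuminated (cap_body V) u ->
  V v -> exists j, cap v `<=` Hem (- u j).
Proof.
move=> ill Vv; have v1 := vertex_gt1 hV Vv.
have vv : enorm v <= dotv v v.
  by have := v1; rewrite -enorm_gt1 -sqr_enorm expr2; nra.
have vsupp := cap_body_vertex_supp hV Vv vv.
have v0 : 0 < dotv v v := lt_trans ltr01 v1.
have [j illj] := ill v (supp_bdry (generator_cap_body (or_intror Vv)) vsupp v0).
exists j; apply/(cap_sub_HemNP (hu j) v1).
apply: ray_enters_ball_of_rim => //.
  by rewrite dotvC; exact: illuminates_dotv_lt0 illj vsupp v0.
move=> x x1 xv; rewrite dotvC; apply: illuminates_dotv_lt0 illj _ _.
  move=> y Ky; apply: (cap_body_vertex_supp hV Vv) Ky.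
  by rewrite enorm_sphere1 // dotvC xv.
by have -> : dotv x x = 1 := x1.
Qed.

Lemma illuminated_HemN_cover : completely_illuminated (cap_body V) u ->
  \bigcup_(j in [set: 'I_k]) Hem (- u j) = @sphere1 R d.
Proof.
move=> ill; apply/seteqP; split => [x [j _ []]//|x x1].
have x0 : 0 < dotv x x by have -> : dotv x x = 1 := x1.
have [p Kp psupp] := cap_body_supp_point x1.
have [j illj] := ill p (supp_bdry Kp psupp x0).
exists j => //; split => //; rewrite dotvNr oppr_gt0 dotvC.
exact: illuminates_dotv_lt0 illj psupp x0.
Qed.

Hypothesis d_gt0 : (0 < d)%N.

Lemma illuminated_of_caps :
  (forall v, V v -> exists j, cap v `<=` Hem (- u j)) ->
  \bigcup_(j in [set: 'I_k]) Hem (- u j) = @sphere1 R d ->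
  completely_illuminated (cap_body V) u.
Proof.
move=> capsH cover p [pK p_int].
have [p1|p1] := ltrP 1 (dotv p p).
  have [v Vv [b [t [bB [/andP[t0 t1] ep]]]]] := closure_cap_body_out hV pK p1.
  have [j /(cap_sub_HemNP (hu j) (vertex_gt1 hV Vv)) ray] := capsH v Vv.
  have tp : 0 < t.
    rewrite lt_def t0 andbT; apply/eqP => t_eq0; move: p1 bB.
    by rewrite ep t_eq0 subr0 scale1r scale0r addr0 /ball1 /=; lra.
  exists j; exists (t * - dotv v (u j)).
    by rewrite mulr_gt0 // oppr_gt0; case: ray.
  rewrite ep (_ : _ + _ = t *: (v - dotv v (u j) *: u j) + (1 - t) *: b).
    apply: interior_cap_body_ball => //.
    by apply: open_ball1_comb (ray_enters_ball_point (hu j) ray) bB _; rewrite tp.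
  by apply/rowP => i; rewrite !mxE; ring.
have [p_lt1|p_eq1] := ltrP (dotv p p) 1.
  by case: p_int; apply: interior_cap_body_ball.
have pp1 : dotv p p = 1 by apply/eqP; rewrite eq_le p1 p_eq1.
have : sphere1 p := pp1; rewrite -cover => -[j _ [_]].
rewrite dotvNr oppr_gt0 => pu.
exists j; exists (- dotv p (u j)); first by rewrite oppr_gt0.
rewrite scaleNr; apply: interior_cap_body_ball => //.
apply: ray_enters_ball_point (hu j) (conj pu _).
by rewrite pp1 subrr; nra.
Qed.

End Illumination.

Theorem theorem1 (R : realType) (d : nat) (hd : (2 <= d)%N)
  (V : set 'rV[R]_d) (hV : cap_body_points V)
  (k : nat) (u : 'I_k -> 'rV[R]_d) (hu : forall j, sphere1 (u j)) :
  completely_illuminated (cap_body V) u <->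
  ((forall v, V v -> exists j, cap v `<=` Hem (- u j)) /\
   \bigcup_(j in [set: 'I_k]) Hem (- u j) = @sphere1 R d).
Proof.
have d_gt0 : (0 < d)%N by apply: leq_trans hd.
split => [ill|[capsH cover]]; last exact: (illuminated_of_caps hV hu d_gt0 capsH cover).
split => [v|]; last exact: (illuminated_HemN_cover hV ill).
exact: (illuminated_cap_sub_HemN hV hu ill).
Qed.
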